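(* Let $m\ge 2$ be an integer. For every positive integer $n$, consider the partitions $\lambda$ of $n$ satisfying both of the following conditions: (i) the smallest part $s$ of $\lambda$ appears fewer than $m$ times; (ii) every part of $\lambda$ that is divisible by $m$ is at most $ms$. The number of such partitions equals the number of partitions of $n$ in which every part appears fewer than $m$ times. *)

From mathcomp Require Import all_boot.
Set Implicit Arguments. Unset Strict Implicit. Unset Printing Implicit Defensive.

(* A partition of n is encoded by its multiplicity function:
   mult i = number of parts equal to i (for 1 <= i <= n); parts are in 1..n
   and multiplicities are at most n, so it lives in a finite type. *)
Definition mults (n : nat) := {ffun 'I_n.+1 -> 'I_n.+1}.

Definition is_partition (n : nat) (f : mults n) : bool :=
  (f ord0 == 0 :> nat) && (\sum_(i < n.+1) i * f i == n).

Definition is_part n (f : mults n) (i : 'I_n.+1) : bool := (0 < i) && (0 < f i).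

Definition cond_lhs (m n : nat) (f : mults n) : bool :=
  [exists s : 'I_n.+1,
     [&& is_part f s,
         [forall j : 'I_n.+1, is_part f j ==> (s <= j)],
         f s < m &
         [forall j : 'I_n.+1, (is_part f j && (m %| j)) ==> (j <= m * s)]]].

Definition cond_rhs (m n : nat) (f : mults n) : bool :=
  [forall i : 'I_n.+1, f i < m].

From mathcomp Require Import all_boot zify.
Set Implicit Arguments. Unset Strict Implicit. Unset Printing Implicit Defensive.

(* Interpolate between the two families.  For a partition with smallest part s
   and 0 <= k <= n put t = max(k, s), and let C_k be the set of partitions in
   which every part <= t occurs fewer than m times and every part divisible by
   m is at most m t.  Then C_0 is the left-hand family and C_n the right-hand
   one.  If m (k+1) > n then C_k = C_(k+1).  Otherwise, for partitions with
   s <= k, write the multiplicity of k+1 as q m + r and glue q groups of m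
   parts k+1 into q parts m (k+1); the part m (k+1) never occurs in C_k, so
   this is a bijection C_k -> C_(k+1), undone by splitting every part
   m (k+1) into m parts k+1.  Partitions with s > k lie in both sets. *)

Lemma card_in_bij (T : finType) (A B : {set T}) (t u : T -> T) :
    {in A, forall x, t x \in B} -> {in B, forall y, u y \in A} ->
    {in A, cancel t u} -> {in B, cancel u t} -> #|A| = #|B|.
Proof.
move=> tA uB tK uK; have -> : B = t @: A.
  apply/setP => y; apply/idP/imsetP => [yB|[x xA ->]]; last exact: tA.
  by exists (u y); rewrite ?uB ?uK.
by rewrite card_in_imset //; apply: can_in_inj tK.
Qed.

Lemma bigD2 (R : Type) (idx : R) (op : Monoid.com_law idx) (I : finType)
    (F : I -> R) (a b : I) : a != b ->
  \big[op/idx]_i F i =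
    op (op (F a) (F b)) (\big[op/idx]_(i | (i != a) && (i != b)) F i).
Proof. by move=> ab; rewrite (bigD1 a) //= (bigD1 b) 1?eq_sym //= Monoid.mulmA. Qed.

Section Interpolation.
Variables (m n : nat).
Hypothesis m_gt1 : 1 < m.

Implicit Types (f g : mults n) (a b i j s : 'I_n.+1).

Lemma part_weight_le f i : is_partition f -> i * f i <= n.
Proof.
by case/andP=> _ /eqP wf; rewrite -[leqRHS]wf (bigD1 i) //= leq_addr.
Qed.

Lemma part_weight2_le f a b : is_partition f -> a != b ->
  a * f a + b * f b <= n.
Proof.
by case/andP=> _ /eqP wf ab; rewrite -[leqRHS]wf (bigD2 _ _ ab) leq_addr.
Qed.

Definition upd2 f a b (x y : nat) : mults n :=
  [ffun i => if i == a then inord x else if i == b then inord y else f i].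

Lemma upd2E f a b x y i : x <= n -> y <= n ->
  upd2 f a b x y i = (if i == a then x else if i == b then y else f i) :> nat.
Proof. by move=> xn yn; rewrite ffunE; do 2?case: ifP => _; rewrite ?inordK. Qed.

Lemma upd2_upd2 f a b x y x' y' :
  upd2 (upd2 f a b x y) a b x' y' = upd2 f a b x' y'.
Proof. by apply/ffunP => i; rewrite !ffunE; case: (i == a); case: (i == b). Qed.

Lemma upd2_id f a b (x y : nat) : x = f a -> y = f b -> upd2 f a b x y = f.
Proof.
move=> -> ->; apply/ffunP => i; rewrite ffunE.
case: ifP => [/eqP-> |_]; first by rewrite inord_val.
by case: ifP => [/eqP-> |_]; rewrite ?inord_val.
Qed.

Lemma is_partition_upd2 f a b x y : is_partition f -> a != b -> 0 < a -> 0 < b ->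
  x <= n -> y <= n -> a * x + b * y = a * f a + b * f b ->
  is_partition (upd2 f a b x y).
Proof.
move=> /andP[f0 /eqP wf] ab a0 b0 xn yn w_eq; apply/andP; split.
  by rewrite upd2E // -!val_eqE /= (ltn_eqF a0) (ltn_eqF b0).
apply/eqP; rewrite -[RHS]wf !(bigD2 _ _ ab) /= !upd2E // eqxx eq_sym (negPf ab) eqxx.
rewrite w_eq; congr (_ + _); apply: eq_bigr => i /andP[ia ib].
by rewrite upd2E // (negPf ia) (negPf ib).
Qed.

Definition min_part f s := is_part f s && [forall j : 'I_n.+1, is_part f j ==> (s <= j)].

Definition cond_at (k : nat) f s :=
  [&& min_part f s, [forall j : 'I_n.+1, (j <= maxn k s) ==> (f j < m)]
    & [forall j : 'I_n.+1, is_part f j && (m %| j) ==> (j <= m * maxn k s)]].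

Definition interp_set (k : nat) :=
  [set f | is_partition f && [exists s : 'I_n.+1, cond_at k f s]].

Lemma min_partP f s :
  reflect (is_part f s /\ forall j, is_part f j -> s <= j) (min_part f s).
Proof.
apply: (iffP andP) => [[fs /forallP smin] | [fs smin]]; split=> //.
  by move=> j; apply/implyP/smin.
by apply/forallP => j; apply/implyP/smin.
Qed.

Lemma cond_atP k f s : reflect
  [/\ min_part f s, forall j, j <= maxn k s -> f j < m
    & forall j, is_part f j -> m %| j -> j <= m * maxn k s] (cond_at k f s).
Proof.
apply: (iffP and3P) => [[fs /forallP fm /forallP fd] | [fs fm fd]]; split=> //.
- by move=> j; apply/implyP/fm.
- by move=> j jf jm; apply: (implyP (fd j)); rewrite jf.
- by apply/forallP => j; apply/implyP/fm.
- by apply/forallP => j; apply/implyP => /andP[]; apply: fd.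
Qed.

Lemma eq_min_part f g s : (forall j, j <= s -> f j = g j :> nat) ->
  min_part f s = min_part g s.
Proof.
move=> fg; rewrite /min_part /is_part fg //; congr (_ && _).
apply: eq_forallb => j; have [js|sj] := leqP j s; first by rewrite fg.
by rewrite (ltnW sj) !implybT.
Qed.

Lemma mult_below_min_part f s j : is_partition f -> min_part f s -> j < s ->
  f j = 0 :> nat.
Proof.
move=> /andP[/eqP f0 _] /min_partP[_ smin] js; have [j0|j_gt0] := posnP j.
  by rewrite (_ : j = ord0) //; apply: val_inj.
apply/eqP; rewrite eqn0Ngt; apply: contraTN js => fj.
by rewrite -leqNgt smin // /is_part j_gt0.
Qed.

Lemma exists_min_part f : is_partition f -> 0 < n -> exists s, min_part f s.
Proof.
move=> /andP[_ /eqP wf] n_gt0; have [i fi | no_part] := pickP (is_part f).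
  case: (arg_minnP (fun i : 'I_n.+1 => val i) fi) => s fs smin.
  by exists s; apply/min_partP; split=> // j /smin.
exfalso; move: n_gt0; rewrite -wf big1 // => i _.
move/negbT: (no_part i); rewrite /is_part !lt0n => /nandP[] /negbNE/eqP->.
  by rewrite mul0n.
by rewrite muln0.
Qed.

Lemma interp_set0 : interp_set 0 = [set f | is_partition f && cond_lhs m f].
Proof.
apply/setP => f; rewrite !inE; apply: andb_id2l => pf.
apply/existsP/existsP => -[s] => [/cond_atP[smin fm fd] | ].
  exists s; move: (smin) => /andP[-> ->] /=; rewrite fm ?max0n //.
  by apply/forallP => j; apply/implyP => /andP[]; rewrite -(max0n s); apply: fd.
case/and4P=> fs sj fsm /forallP fd; exists s; have smin : min_part f s by apply/andP.
apply/cond_atP; rewrite max0n; split=> // [j|j jf jm]; last first.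
  by apply: (implyP (fd j)); rewrite jf.
rewrite leq_eqVlt => /orP[/eqP/val_inj-> // | js].
by rewrite (mult_below_min_part pf smin js) ltnW.
Qed.

Lemma interp_set_n : 0 < n ->
  interp_set n = [set f | is_partition f && cond_rhs m f].
Proof.
move=> n_gt0; apply/setP => f; rewrite !inE; apply: andb_id2l => pf.
apply/existsP/forallP => [[s /cond_atP[_ fm _]] i | fm].
  by apply: fm; rewrite leq_max -ltnS ltn_ord.
have [s smin] := exists_min_part pf n_gt0; exists s.
by apply/cond_atP; split=> // j _ _; have := ltn_ord j; nia.
Qed.

Lemma cond_at_succ_above k f s : k < s -> cond_at k f s = cond_at k.+1 f s.
Proof. by move=> ks; rewrite /cond_at (maxn_idPr (ltnW ks)) (maxn_idPr ks). Qed.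

Lemma cond_at_succ_overflow k f s : is_partition f -> n < m * k.+1 ->
  cond_at k f s = cond_at k.+1 f s.
Proof.
move=> pf n_lt; have [ks|sk] := ltnP k s; first exact: cond_at_succ_above.
apply/cond_atP/cond_atP; rewrite (maxn_idPl sk) (maxn_idPl (leqW sk));
  move=> -[smin fm fd]; split=> // j.
- rewrite leq_eqVlt ltnS => /orP[/eqP jk | /fm //].
  by have := part_weight_le j pf; rewrite jk; nia.
- by move=> jf jm; rewrite (leq_trans (fd j jf jm)) ?leq_mul2l ?leqnSn ?orbT.
- by move=> jk; apply: fm; rewrite leqW.
- move=> _ /dvdnP[q jq]; have jn : j <= n by rewrite -ltnS.
  rewrite jq mulnC in jn *; rewrite leq_pmul2l ?(ltnW m_gt1) // -ltnS.
  by rewrite -(ltn_pmul2l (ltnW m_gt1)) (leq_ltn_trans jn).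
Qed.

Section Glue.
Variable k : nat.
Hypothesis mk_le : m * k.+1 <= n.

Let K : 'I_n.+1 := inord k.+1.
Let M : 'I_n.+1 := inord (m * k.+1).

Lemma val_K : K = k.+1 :> nat.
Proof. by rewrite inordK // ltnS (leq_trans _ mk_le) // leq_pmull // ltnW. Qed.

Lemma val_M : M = m * k.+1 :> nat.
Proof. by rewrite inordK. Qed.

Lemma K_neq_M : K != M.
Proof. by rewrite -val_eqE /= val_K val_M; apply/eqP; nia. Qed.

Lemma neq_K_M_below j : j <= k -> (j == K) = false /\ (j == M) = false.
Proof. by move=> jk; rewrite -!val_eqE /= val_K val_M; split; apply/eqP; nia. Qed.

Definition has_part_below f := [exists i, is_part f i && (i <= k)].

Definition glue f :=
  if has_part_below f then upd2 f K M (f K %% m) (f K %/ m) else f.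

Definition unglue g :=
  if has_part_below g then upd2 g K M (g K + m * g M) 0 else g.

Lemma has_part_below_min f s : min_part f s -> has_part_below f = (s <= k).
Proof.
move=> /min_partP[fs smin]; apply/existsP/idP => [[i /andP[/smin si ik]]|sk].
  exact: leq_trans ik.
by exists s; rewrite fs.
Qed.

Lemma mult_M_eq0 f s : cond_at k f s -> s <= k -> f M = 0 :> nat.
Proof.
move=> /cond_atP[_ _ fd] sk; apply/eqP; rewrite eqn0Ngt; apply/negP => fM.
have := fd M; rewrite /is_part fM val_M (maxn_idPl sk) muln_gt0 dvdn_mulr //.
by rewrite (ltnW m_gt1) leq_pmul2l ?(ltnW m_gt1) // ltnn => /(_ isT isT).
Qed.

Lemma glueE f j : has_part_below f ->
  glue f j = (if j == K then f K %% m else if j == M then f K %/ m else f j) :> nat.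
Proof.
move=> hf; have fKn : f K <= n by rewrite -ltnS.
rewrite /glue hf; apply: upd2E.
- exact: leq_trans (leq_mod _ _) fKn.
- exact: leq_trans (leq_div _ _) fKn.
Qed.

Lemma unglueE g j : is_partition g -> has_part_below g ->
  unglue g j = (if j == K then g K + m * g M else if j == M then 0 else g j) :> nat.
Proof.
move=> pg hg; rewrite /unglue hg; apply: upd2E => //.
by have := part_weight2_le pg K_neq_M; rewrite val_K val_M; nia.
Qed.

Lemma K_gt0 : 0 < K. Proof. by rewrite val_K. Qed.

Lemma M_gt0 : 0 < M. Proof. by rewrite val_M muln_gt0 ltnW. Qed.

Lemma glue_partition f : is_partition f -> f M = 0 :> nat -> is_partition (glue f).
Proof.
move=> pf fM0; rewrite /glue; case: ifP => // _; have fKn : f K <= n by rewrite -ltnS.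
apply: is_partition_upd2 K_neq_M K_gt0 M_gt0 _ _ _ => //.
- exact: leq_trans (leq_mod _ _) fKn.
- exact: leq_trans (leq_div _ _) fKn.
- by rewrite fM0 val_K val_M {3}(divn_eq (f K) m); nia.
Qed.

Lemma unglue_partition g : is_partition g -> is_partition (unglue g).
Proof.
move=> pg; rewrite /unglue; case: ifP => // _.
have := part_weight2_le pg K_neq_M; rewrite val_K val_M => wle.
by apply: is_partition_upd2 K_neq_M K_gt0 M_gt0 _ _ _; rewrite ?val_K ?val_M //; nia.
Qed.

Lemma glue_eq_below f j : has_part_below f -> j <= k -> glue f j = f j :> nat.
Proof. by move=> hf /neq_K_M_below[jK jM]; rewrite glueE // jK jM. Qed.

Lemma unglue_eq_below g j : is_partition g -> has_part_below g -> j <= k ->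
  unglue g j = g j :> nat.
Proof. by move=> pg hg /neq_K_M_below[jK jM]; rewrite unglueE // jK jM. Qed.

Lemma cond_at_glue f s : is_partition f -> cond_at k f s -> s <= k ->
  cond_at k.+1 (glue f) s.
Proof.
move=> pf cf sk; have /cond_atP[smin fm fd] := cf.
have hf : has_part_below f by rewrite (has_part_below_min smin).
rewrite (maxn_idPl sk) in fm fd; apply/cond_atP; rewrite (maxn_idPl (leqW sk)); split.
- rewrite (@eq_min_part _ f) // => j js.
  by rewrite glue_eq_below // (leq_trans js).
- move=> j; rewrite leq_eqVlt ltnS => /orP[/eqP jK | jk].
    have -> : j = K by apply/val_inj; rewrite /= val_K.
    by rewrite glueE // eqxx ltn_mod ltnW.
  by rewrite glue_eq_below ?fm.
- move=> j; rewrite /is_part glueE //.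
  case: eqP => [-> _ _ | _]; first by rewrite val_K leq_pmull // ltnW.
  case: eqP => [-> _ _ | _ jf jm]; first by rewrite val_M.
  by rewrite (leq_trans (fd j jf jm)) // leq_mul2l leqnSn orbT.
Qed.

Lemma cond_at_unglue g s : is_partition g -> cond_at k.+1 g s -> s <= k ->
  cond_at k (unglue g) s.
Proof.
move=> pg cg sk; have /cond_atP[smin gm gd] := cg.
have hg : has_part_below g by rewrite (has_part_below_min smin).
have s_gt0 : 0 < s by case/min_partP: smin => /andP[].
rewrite (maxn_idPl (leqW sk)) in gm gd; apply/cond_atP; rewrite (maxn_idPl sk); split.
- rewrite (@eq_min_part _ g) // => j js.
  by rewrite unglue_eq_below // (leq_trans js).
- by move=> j jk; rewrite unglue_eq_below // gm // leqW.
- move=> j; rewrite /is_part unglueE //.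
  case: eqP => [-> _ _ | _]; first by rewrite val_K; nia.
  case: eqP => [_ /andP[_] // | /eqP jM jf jm].
  have jMn : j != m * k.+1 :> nat by rewrite -val_M val_eqE.
  move: (gd j jf jm) jMn; case/dvdnP: jm => q ->.
  by rewrite mulnC eqn_pmul2l ?leq_pmul2l ?(ltnW m_gt1) //; lia.
Qed.

Lemma glue_id f : ~~ has_part_below f -> glue f = f.
Proof. by rewrite /glue => /negPf->. Qed.

Lemma unglue_id g : ~~ has_part_below g -> unglue g = g.
Proof. by rewrite /unglue => /negPf->. Qed.

Lemma glue_mem f : f \in interp_set k -> glue f \in interp_set k.+1.
Proof.
rewrite !inE => /andP[pf /existsP[s cf]]; have /cond_atP[smin _ _] := cf.
have [sk | ks] := leqP s k.
  rewrite glue_partition ?(mult_M_eq0 cf) //.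
  by apply/existsP; exists s; apply: cond_at_glue.
rewrite glue_id ?(has_part_below_min smin) -?ltnNge // pf.
by apply/existsP; exists s; rewrite -cond_at_succ_above.
Qed.

Lemma unglue_mem g : g \in interp_set k.+1 -> unglue g \in interp_set k.
Proof.
rewrite !inE => /andP[pg /existsP[s cg]]; have /cond_atP[smin _ _] := cg.
rewrite unglue_partition //; have [sk | ks] := leqP s k.
  by apply/existsP; exists s; apply: cond_at_unglue.
rewrite unglue_id ?(has_part_below_min smin) -?ltnNge //.
by apply/existsP; exists s; rewrite cond_at_succ_above.
Qed.

Lemma glueK : {in interp_set k, cancel glue unglue}.
Proof.
move=> f; rewrite inE => /andP[pf /existsP[s cf]]; have /cond_atP[smin _ _] := cf.
have hf := has_part_below_min smin; have [sk | ks] := leqP s k; last first.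
  by rewrite glue_id ?unglue_id // hf -ltnNge.
have /cond_atP[smin' _ _] := cond_at_glue pf cf sk.
rewrite /unglue (has_part_below_min smin') sk !glueE ?hf //.
rewrite !eqxx [M == K]eq_sym (negPf K_neq_M) /glue hf sk upd2_upd2.
apply: upd2_id; first by rewrite addnC mulnC -divn_eq.
by rewrite (mult_M_eq0 cf sk).
Qed.

Lemma unglueK : {in interp_set k.+1, cancel unglue glue}.
Proof.
move=> g; rewrite inE => /andP[pg /existsP[s cg]]; have /cond_atP[smin gm _] := cg.
have hg := has_part_below_min smin; have [sk | ks] := leqP s k; last first.
  by rewrite unglue_id ?glue_id // hg -ltnNge.
have gKm : g K < m by apply: gm; rewrite val_K leq_max leqnn.
have /cond_atP[smin' _ _] := cond_at_unglue pg cg sk.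
rewrite /glue (has_part_below_min smin') sk !unglueE ?hg // eqxx /unglue hg sk upd2_upd2.
apply: upd2_id; first by rewrite addnC mulnC modnMDl modn_small.
by rewrite addnC mulnC divnMDl ?divn_small ?addn0 // ltnW.
Qed.

End Glue.

Lemma card_interp_set_succ k : #|interp_set k| = #|interp_set k.+1|.
Proof.
have [mk_le | n_lt] := leqP (m * k.+1) n.
  exact: card_in_bij (glue_mem mk_le) (unglue_mem mk_le) (glueK mk_le) (unglueK mk_le).
apply: eq_card => f; rewrite !inE; apply: andb_id2l => pf.
by apply: eq_existsb => s; apply: cond_at_succ_overflow.
Qed.

Lemma card_interp_set k : #|interp_set 0| = #|interp_set k|.
Proof. by elim: k => // k ->; apply: card_interp_set_succ. Qed.

End Interpolation.

Theorem theorem6 (m : nat) (hm : 2 <= m) (n : nat) (hn : 0 < n) :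
  #|[set f : mults n | is_partition f && cond_lhs m f]| =
  #|[set f : mults n | is_partition f && cond_rhs m f]|.
Proof.
by rewrite -(interp_set0 n hm) -(interp_set_n hm hn); apply: card_interp_set.
Qed.
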